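(* Let $G$ be a maximal $1$-plane graph with at least $4$ vertices in which every edge lies in some $K_4$-subgraph, and let $\{G_i\}_{i\in\{0,\dots,N\}}$ be a $K_4$-extension sequence of $G$ determined by the SWM*-rule, with $G_i=G[V(G_{i-1})\cup V(F_i)]$. Let $i\in\{0,\dots,N-1\}$, assume that $F_{i+1}$ is a strong $K_4$-link from $G_i$, and let $x$ be the vertex of $V(F_{i+1})\setminus V(G_i)$. Then neither of the following can happen: (1) $G_i$ has two distinct non-removable edges $f_1=a_1b_1$ and $f_2=a_2b_2$ which are crossed (in $G$) by edges $xc_1$ and $xc_2$ respectively, where $c_1,c_2\in V(G_i)$; (2) $G_i$ has a $3$-cycle $abca$ such that $ab$ is non-removable in $G_i$, both $\{a,c\}$ and $\{b,c\}$ are cut-sets of $G_i$, and the edge $xc$ crosses $ab$.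
   Context: A $1$-plane graph is a simple graph drawn in the plane (vertices distinct points, edges arcs joining their ends, no edge crossing itself, two edges crossing at most once, adjacent edges not crossing) so that every edge is crossed at most once; it is maximal if no edge joining two non-adjacent vertices can be added so that the result is still a simple $1$-plane graph. An edge is clean if it crosses no other edge. If edge $ux$ crosses another edge at point $\alpha$, the arc $u\alpha$ is the near half-edge of $ux$ incident with $u$. Two edge segments are consecutive on the boundary of a face if they are consecutive on one of the closed walks forming that boundary. $G[A]$ is the subgraph induced by $A$. A cut-set is a set of vertices whose deletion disconnects the graph. For a vertex-induced subgraph $G'$ and a $K_4$-subgraph $F$ of $G$ with $1\le|V(F)\cap V(G')|\le 3$, $F$ is a strong/weak/micro $K_4$-link from $G'$ when $|V(F)\cap V(G')|=3/2/1$, and $G[V(G')\cup V(F)]$ is the corresponding $K_4$-extension of $G'$. SWM*-rule for a proper vertex-induced subgraph $G'$: choose any strong $K_4$-link from $G'$ if one exists; otherwise any weak one if one exists; otherwise choose $u\in V(G')$ with $N_G(u)\not\subseteq V(G')$, then $x\in N_G(u)\setminus V(G')$ such that for some $w\in N_G(u)\cap V(G')$ the edge $ux$ (or its near half-edge at $u$) and $uw$ (or its near half-edge at $u$) are consecutive on the boundary of some face of $G$; if $ux$ is clean choose any $K_4$-subgraph containing $ux$, and if $ux$ crosses edge $st$ choose $G[\{u,x,s,t\}]$. A $K_4$-extension sequence determined by the SWM*-rule is $G_0\cong K_4$, $G_N=G$, $G_i=G[V(G_{i-1})\cup V(F_i)]$ with $F_i$ a $K_4$-link from $G_{i-1}$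 chosen by the SWM*-rule. An edge $f$ of a $2$-connected graph $H$ is removable in $H$ if $H-f$ is $2$-connected, and non-removable otherwise (each $G_i$ is $2$-connected). *)

(* Combinatorial model of a 1-plane drawing via its
   planarization, encoded as a genus-0 combinatorial map (rotation system). *)
From mathcomp Require Import all_boot all_fingroup.
Set Implicit Arguments. Unset Strict Implicit. Unset Printing Implicit Defensive.

(* Planarization of a drawing of a graph on vertex type V:
   darts (half-segments), alph = segment involution, sigm = rotation at
   nodes, lab d = Some v if dart d leaves the vertex point v, None if it
   leaves a crossing point. Faces are the orbits of phi d = sigm (alph d). *)
Record map1p (V : finType) := Map1p {
  dart : finType;
  alph : {perm dart};
  sigm : {perm dart};
  lab : dart -> option V }.

Section Drawing.
Variables (V : finType) (adj : rel V) (M : map1p V).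
Local Notation D := (dart M).
Local Notation a := (@alph _ M).
Local Notation s := (@sigm _ M).
Local Notation lb := (@lab _ M).

Definition phi : {perm D} := (@alph _ M * @sigm _ M)%g.

(* other end vertex of the G-edge whose near half-edge at its origin is d *)
Definition far (d : D) : option V :=
  match lb (a d) with
  | Some v => Some v
  | None => lb (a (s (s (a d))))
  end.

Definition drawing : Prop :=
  [/\ (forall u v, adj u v = adj v u) /\ (forall u, ~~ adj u u),
    (forall d, a (a d) = d /\ a d != d),
    (* the planarization is connected and of genus 0 (Euler's formula) *)
    (forall d e, connect [rel x y | (y == a x) || (y == s x)] d e) /\
    2 * (#|porbits s| + #|porbits phi|) = #|D| + 4 ,
    (* vertex points: each vertex of V is exactly one node *)
    (forall d, lb (s d) = lb d) /\
    (forall v, (exists d, lb d = Some v) /\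
        forall d e, lb d = Some v -> lb e = Some v -> fconnect s d e) &
    [/\
    (* crossing points: degree 4, neighbours are vertex points, the two
       crossing edges (alternating in rotation) have 4 distinct ends *)
    (forall c, lb c = None ->
       [/\ s (s (s (s c))) = c, s (s c) != c, lb (a c) != None &
           uniq [:: lb (a c); lb (a (s c)); lb (a (s (s c)));
                    lb (a (s (s (s c))))]]),
    (* no loops, every near half-edge leads to a vertex *)
    (forall d u, lb d = Some u -> far d != None /\ far d != Some u),
    (* no multiple edges *)
    (forall d e, lb d = lb e -> lb d != None -> far d = far e -> d = e) &
    (forall u v, adj u v <-> exists d, lb d = Some u /\ far d = Some v)]].

Definition crosses_at (d : D) (x y : V) : Prop :=
  lb (a d) = None /\
  ((lb (a (s (a d))) = Some x /\ lb (a (s (s (s (a d))))) = Some y) \/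
   (lb (a (s (a d))) = Some y /\ lb (a (s (s (s (a d))))) = Some x)).

Definition crosses (p q x y : V) : Prop :=
  exists d, [/\ lb d = Some p, far d = Some q & crosses_at d x y].

(* the segments of darts d and e are consecutive on the boundary of a face *)
Definition seg_consec (d e : D) : Prop :=
  exists f, (((f == d) || (f == a d)) && ((phi f == e) || (phi f == a e)))
         || (((f == e) || (f == a e)) && ((phi f == d) || (phi f == a d))).

(* maximality: no edge joining non-adjacent vertices can be added, neither
   clean (inside a face) nor crossing a single currently clean edge st with
   u, v not in {s,t} (through the two faces on either side of st) *)
Definition maximal : Prop :=
  forall u v, u != v -> ~~ adj u v ->
   ~ (exists d e, [/\ lb d = Some u, lb e = Some v & fconnect phi d e]) /\
   ~ (exists g x y d e, [/\ lb g = Some x, lb (a g) = Some y,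
        u \notin [:: x; y], v \notin [:: x; y] &
        [/\ lb d = Some u, lb e = Some v,
            fconnect phi g d & fconnect phi (a g) e]]).

Definition clique4 (A : {set V}) : Prop :=
  #|A| = 4 /\ {in A &, forall x y, x != y -> adj x y}.

Definition every_edge_in_K4 : Prop :=
  forall u v, adj u v -> exists A, [/\ clique4 A, u \in A & v \in A].

Definition ind_connected (S : {set V}) (r : rel V) : Prop :=
  forall u v, u \in S -> v \in S ->
    connect [rel x y | [&& x \in S, y \in S & r x y]] u v.

Definition two_connected (S : {set V}) (r : rel V) : Prop :=
  [/\ 2 < #|S|, ind_connected S r &
      forall v, v \in S -> ind_connected (S :\ v) r].

Definition nonremovable (S : {set V}) (x y : V) : Prop :=
  ~ two_connected S [rel p q | adj p q && ([set p; q] != [set x; y])].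

Definition cutset (S T : {set V}) : Prop :=
  T \subset S /\ ~ ind_connected (S :\: T) adj.

Definition has_link (S : {set V}) (k : nat) : Prop :=
  exists F, clique4 F /\ #|F :&: S| = k.

Definition swm (S F : {set V}) : Prop :=
  [/\ clique4 F, 0 < #|F :&: S| < 4,
      has_link S 3 -> #|F :&: S| = 3,
      ~ has_link S 3 -> has_link S 2 -> #|F :&: S| = 2 &
      ~ has_link S 3 -> ~ has_link S 2 ->
      exists u x w d e,
        [/\ u \in S, x \notin S, w \in S,
            [/\ lb d = Some u, far d = Some x, lb e = Some u,
                far e = Some w & seg_consec d e] &
            (lb (a d) != None /\ u \in F /\ x \in F) \/
            (exists y z, crosses_at d y z /\ F = [set u; x; y; z])]].

(* K4-extension sequence G_0,...,G_N (vertex sets VS i) determined by the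
   SWM*-rule, with links F i (1 <= i <= N) *)
Definition K4_ext_seq (N : nat) (VS F : nat -> {set V}) : Prop :=
  [/\ clique4 (VS 0), VS N = [set: V] &
      forall i, 0 < i <= N -> swm (VS i.-1) (F i) /\ VS i = VS i.-1 :|: F i].

End Drawing.

From mathcomp Require Import all_boot all_fingroup.
Set Implicit Arguments. Unset Strict Implicit. Unset Printing Implicit Defensive.

(* In both configurations a non-removable edge [ab] of [G_i] is crossed by an
   edge [xc] with [c] in [G_i]; the ends of two crossing edges span a K4, so
   {x, c, a, b} is a K4 with [x] outside [G_i].  Such an edge is always
   removable.  Every [G_j] is 2-connected, since each link meets [G_(j-1)] in
   two vertices or, for a micro link, in one vertex [u] plus an edge between
   the two vertices seen across the face at the chosen corner of [u]
   (maximality makes vertices on a common face adjacent).  In [G_i - ab] the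
   vertices [a] and [b] are joined through [c]; when [c] is deleted as well,
   look at the link [F_m] that first contains both.  Either it contains both
   and its fourth vertex avoids [c], or [b] alone is new and [F_m] has an old
   vertex [p <> c], through which [a] reaches [b] inside [G_(m-1) - c]: if [c]
   is old, {x, c, a, b} is a weak link, so the SWM rule picks a link with at
   least two old vertices. *)

Definition rel_on (T : finType) (A : {set T}) (e : rel T) : rel T :=
  [rel p q | [&& p \in A, q \in A & e p q]].

Definition deledge (T : finType) (e : rel T) (E : {set T}) : rel T :=
  [rel p q | e p q && ([set p; q] != E)].

Lemma set_neq_mem (T : finType) (t : T) (A B : {set T}) :
  t \notin A -> t \in B -> A != B.
Proof. by move=> tA tB; apply: contraNneq tA => ->. Qed.

Lemma card_setI4 (T : finType) (p0 p1 p2 p3 : T) (S : {set T}) :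
  uniq [:: p0; p1; p2; p3] ->
  #|[set p0; p1; p2; p3] :&: S| = count (mem S) [:: p0; p1; p2; p3].
Proof.
move=> U; set s := [:: p0; p1; p2; p3].
have -> : [set p0; p1; p2; p3] :&: S = [set y in [seq y <- s | y \in S]].
  by apply/setP=> y; rewrite !inE mem_filter !inE -!orbA andbC.
by rewrite cardsE (card_uniqP _) ?filter_uniq // size_filter.
Qed.

Lemma card_set3_le (T : finType) (a b c : T) : #|[set a; b; c]| <= 3.
Proof.
apply: leq_trans (leq_card_setU _ _) _; rewrite cards1 addn1 ltnS.
by apply: leq_trans (leq_card_setU _ _) _; rewrite !cards1.
Qed.

Section Cliques.
Variables (T : finType) (r : rel T).

Lemma clique4_uniq p0 p1 p2 p3 :
  clique4 r [set p0; p1; p2; p3] -> uniq [:: p0; p1; p2; p3].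
Proof.
case=> card4 _; apply/card_uniqP; rewrite [size _]/= -card4.
by apply: eq_card => y; rewrite !inE -!orbA.
Qed.

Lemma clique4_of p0 p1 p2 p3 : symmetric r -> uniq [:: p0; p1; p2; p3] ->
  r p0 p1 -> r p0 p2 -> r p0 p3 -> r p1 p2 -> r p1 p3 -> r p2 p3 ->
  clique4 r [set p0; p1; p2; p3].
Proof.
move=> r_sym U r01 r02 r03 r12 r13 r23; split.
  by rewrite -(setIT [set p0; p1; p2; p3]) card_setI4 //= !inE.
move=> y z; rewrite !inE -!orbA.
by case/or4P=> /eqP-> /or4P [] /eqP-> //; rewrite ?eqxx // => _; rewrite r_sym.
Qed.

Lemma clique4_sub_no_link (S K : {set T}) :
  ~ has_link r S 3 -> ~ has_link r S 2 -> clique4 r K -> 1 < #|K :&: S| ->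
  K \subset S.
Proof.
move=> N3 N2 cK gt1; have [cardK _] := cK.
have le4 : #|K :&: S| <= 4 by rewrite -cardK subset_leq_card ?subsetIl.
have eq4 : #|K :&: S| = 4.
  move: gt1 le4; case E: #|K :&: S| => [|[|[|[|[|n]]]]] // _ _.
  - by case: N2; exists K.
  - by case: N3; exists K.
by apply/setIidPl/eqP; rewrite eqEcard subsetIl cardK eq4.
Qed.

End Cliques.

Section Connectivity.
Variables (T : finType) (r : rel T).
Hypothesis r_sym : symmetric r.

Lemma rel_on_sym (A : {set T}) (e : rel T) :
  symmetric e -> symmetric (rel_on A e).
Proof. by move=> e_sym p q; rewrite /rel_on /= e_sym andbCA. Qed.

Lemma deledge_sym (E : {set T}) : symmetric (deledge r E).
Proof. by move=> p q; rewrite /deledge /= r_sym setUC. Qed.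

Lemma connect_deledge_swap (A : {set T}) a b :
  connect (rel_on A (deledge r [set a; b])) a b ->
  connect (rel_on A (deledge r [set b; a])) b a.
Proof. by rewrite setUC sym_connect_sym //; apply/rel_on_sym/deledge_sym. Qed.

Lemma connect_rel_on_lift (A B : {set T}) (e : rel T) p q :
  {in A &, forall y z, r y z -> connect (rel_on B e) y z} ->
  connect (rel_on A r) p q -> connect (rel_on B e) p q.
Proof. by move=> lift; apply: connect_sub => y z /and3P [yA zA]; apply: lift. Qed.

Lemma rel_on_connect1 (A : {set T}) (e : rel T) p q :
  p \in A -> q \in A -> e p q -> connect (rel_on A e) p q.
Proof. by move=> pA qA pq; apply: connect1; rewrite /rel_on /= pA qA pq. Qed.

Lemma deledge_connect1 (A E : {set T}) p q : p \in A -> q \in A -> r p q ->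
  [set p; q] != E -> connect (rel_on A (deledge r E)) p q.
Proof. by move=> pA qA pq pqE; apply: rel_on_connect1; rewrite // /deledge /= pq pqE. Qed.

Lemma ind_connected_setU (A B : {set T}) :
  ind_connected A r -> ind_connected B r ->
  (exists p q, [/\ p \in A, q \in B & (p == q) || r p q]) ->
  ind_connected (A :|: B) r.
Proof.
move=> cA cB [p [q [pA qB pq]]].
have sub (C : {set T}) y z : C \subset A :|: B -> ind_connected C r -> y \in C -> z \in C ->
    connect (rel_on (A :|: B) r) y z.
  move=> sC cC yC zC; apply: connect_rel_on_lift (cC y z yC zC) => u v uC vC uv.
  by apply: rel_on_connect1; rewrite ?(subsetP sC).
have to_p y : y \in A :|: B -> connect (rel_on (A :|: B) r) y p.
  case/setUP => [yA|yB]; first exact: sub (subsetUl A B) cA yA pA.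
  apply: connect_trans (sub _ _ _ (subsetUr A B) cB yB qB) _.
  case/orP: pq => [/eqP->|pq]; first exact: connect0.
  by apply: rel_on_connect1; rewrite ?inE ?pA ?qB ?orbT // r_sym.
move=> y z yAB zAB; apply: connect_trans (to_p y yAB) _.
by rewrite sym_connect_sym ?to_p //; apply: rel_on_sym.
Qed.

Lemma ind_connected_clique (K A : {set T}) :
  clique4 r K -> A \subset K -> ind_connected A r.
Proof.
move=> [_ cK] sAK y z yA zA; have [->|yz] := eqVneq y z; first exact: connect0.
by apply: rel_on_connect1; rewrite // cK ?(subsetP sAK).
Qed.

Lemma clique4_two_connected (K : {set T}) : clique4 r K -> two_connected K r.
Proof.
move=> cK; split; first by case: cK => ->.
  exact: ind_connected_clique cK (subxx K).
by move=> v _; apply: ind_connected_clique cK (subD1set K v).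
Qed.

Lemma two_connected_setD1 (S : {set T}) v :
  two_connected S r -> ind_connected (S :\ v) r.
Proof.
case=> _ cS cSv; case: (boolP (v \in S)) => [/cSv //|vS].
by rewrite (setDidPl _) // disjoint_sym disjoints1.
Qed.

Definition anchored (S K : {set T}) : Prop :=
  exists u y w, [/\ u \in K :&: S, y \in K :\ u, w \in S :\ u & (y == w) || r y w].

Lemma two_connected_setU (S K : {set T}) :
  two_connected S r -> clique4 r K -> anchored S K -> two_connected (S :|: K) r.
Proof.
move=> cS cK [u [y [w [uKS yKu wSu yw]]]].
move: uKS; rewrite inE => /andP [uK uS].
have [gt2 cS0 _] := cS; split.
- exact: leq_trans gt2 (subset_leq_card (subsetUl S K)).
- apply: ind_connected_setU cS0 (ind_connected_clique cK (subxx K)) _.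
  by exists u, u; rewrite uS uK eqxx.
- move=> v _; rewrite setDUl.
  apply: ind_connected_setU (two_connected_setD1 cS) _ _.
    exact: ind_connected_clique cK (subD1set K v).
  have [->|vu] := eqVneq v u; first by exists w, y; rewrite eq_sym r_sym.
  by exists u, u; rewrite !inE uS uK eq_sym vu eqxx.
Qed.

Lemma ind_connected_deledge (A : {set T}) a b : ind_connected A r ->
  (a \in A -> b \in A -> connect (rel_on A (deledge r [set a; b])) a b) ->
  ind_connected A (deledge r [set a; b]).
Proof.
move=> cA ab y z yA zA; apply: connect_rel_on_lift (cA y z yA zA) => p q pA qA pq.
have [pqE|] := eqVneq [set p; q] [set a; b]; last exact: deledge_connect1.
have : (p \in [set a; b]) && (q \in [set a; b]) by rewrite -pqE set21 set22.
rewrite !inE => /andP [/orP [] /eqP ? /orP [] /eqP ?]; subst p q;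
  [exact: connect0 | exact: ab | | exact: connect0].
by rewrite setUC; apply: connect_deledge_swap; apply: ab.
Qed.

Lemma triangle_path (A : {set T}) a b c : a \in A -> b \in A -> c \in A ->
  a != b -> c != a -> c != b -> r a c -> r c b ->
  connect (rel_on A (deledge r [set a; b])) a b.
Proof.
move=> aA bA cA ab ca cb rac rcb; apply: (connect_trans (y := c)).
  by apply: deledge_connect1 (set_neq_mem (t := b) _ (set22 a b)) => //;
     rewrite !inE negb_or eq_sym ab eq_sym cb.
by apply: deledge_connect1 (set_neq_mem (t := a) _ (set21 a b)) => //;
   rewrite !inE negb_or eq_sym ca.
Qed.

Lemma clique4_path_avoiding (K B : {set T}) a b c :
  clique4 r K -> K \subset B -> a \in K -> b \in K ->
  a != b -> c != a -> c != b ->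
  connect (rel_on (B :\ c) (deledge r [set a; b])) a b.
Proof.
move=> cK KB aK bK ab ca cb.
have /subsetPn [w wK +] : ~~ (K \subset [set a; b; c]).
  by apply/negP => /subset_leq_card; case: cK => -> _; rewrite leqNgt ltnS card_set3_le.
rewrite !inE -!orbA !negb_or => /and3P [wa wb wc].
have inB p : p \in K -> p != c -> p \in B :\ c by rewrite !inE => ? ->; apply: (subsetP KB).
have [_ cl] := cK.
by apply: (triangle_path (c := w)); rewrite ?inB // 1?eq_sym // cl // eq_sym.
Qed.

End Connectivity.

Section Drawing.
Variables (V : finType) (adj : rel V) (M : map1p V).
Hypotheses (drawM : drawing adj M) (maxM : maximal adj M).
Local Notation D := (dart M).
Local Notation al := (@alph _ M).
Local Notation sg := (@sigm _ M).
Local Notation lb := (@lab _ M).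

Lemma adj_sym : symmetric adj.
Proof. by case: drawM => -[]. Qed.

Lemma alphK : involutive al.
Proof. by case: drawM => _ inv _ _ _ d; case: (inv d). Qed.

Lemma lab_sigm d : lb (sg d) = lb d.
Proof. by case: drawM => _ _ _ []. Qed.

Lemma crossingP c : lb c = None ->
  [/\ sg (sg (sg (sg c))) = c, lb (al c) != None &
      uniq [:: lb (al c); lb (al (sg c)); lb (al (sg (sg c)));
               lb (al (sg (sg (sg c))))]].
Proof. by case: drawM => _ _ _ _ [cross _ _ _] /cross []. Qed.

Lemma far_neq d u : lb d = Some u -> far d != None /\ far d != Some u.
Proof. by case: drawM => _ _ _ _ [_ loopless _ _]; apply: loopless. Qed.

Lemma adjP u v : adj u v <-> exists d, lb d = Some u /\ far d = Some v.
Proof. by case: drawM => _ _ _ _ [_ _ _ edges]; apply: edges. Qed.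

Lemma phiE d : phi M d = sg (al d).
Proof. by rewrite /phi permM. Qed.

Lemma face_adj d e u v : lb d = Some u -> lb e = Some v ->
  fconnect (phi M) d e -> u != v -> adj u v.
Proof.
move=> ld le de uv; apply/negPn/negP => nadj.
by case: (maxM uv nadj) => face_free _; apply: face_free; exists d, e.
Qed.

Lemma corner_adj c p q : lb (al c) = Some p -> lb (al (sg c)) = Some q ->
  p != q -> adj p q.
Proof.
move=> lp lq; apply: (face_adj lp (_ : lb (iter 2 (phi M) (al c)) = Some q)).
  by rewrite /= !phiE alphK lab_sigm.
exact: fconnect_iter.
Qed.

Lemma crossing_clique4 c : lb c = None -> exists p0 p1 p2 p3,
  [/\ lb (al c) = Some p0, lb (al (sg c)) = Some p1, lb (al (sg (sg c))) = Some p2,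
      lb (al (sg (sg (sg c)))) = Some p3 & clique4 adj [set p0; p1; p2; p3]].
Proof.
move=> lc; have [sg4 _ U] := crossingP lc.
have none k : lb (al (iter k sg c)) != None.
  have lck : lb (iter k sg c) = None by elim: k => //= k; rewrite lab_sigm.
  by have [_ nk _] := crossingP lck.
move: U (none 0) (none 1) (none 2) (none 3) => /=.
case E0: (lb (al c)) => [p0|] //; case E1: (lb (al (sg c))) => [p1|] //.
case E2: (lb (al (sg (sg c)))) => [p2|] //; case E3: (lb (al (sg (sg (sg c))))) => [p3|] //.
move=> U _ _ _ _; exists p0, p1, p2, p3; split => //.
have {}U : uniq [:: p0; p1; p2; p3] by rewrite -(map_inj_uniq (@Some_inj _)).
have := U; rewrite /= !inE !negb_or.
move=> /and4P [/and3P [n01 _ n03] /andP [n12 _] n23 _].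
have lc1 : lb (sg c) = None by rewrite lab_sigm.
apply: clique4_of adj_sym U _ _ _ _ _ _.
- exact: corner_adj E0 E1 n01.
- by apply/adjP; exists (al c); rewrite /far alphK lc E2.
- by rewrite adj_sym; apply: (corner_adj E3); rewrite ?sg4 // eq_sym.
- exact: corner_adj E1 E2 n12.
- by apply/adjP; exists (al (sg c)); rewrite /far alphK lc1 E3.
- exact: corner_adj E2 E3 n23.
Qed.

Lemma crosses_clique4 p q s t : crosses M p q s t -> clique4 adj [set p; q; s; t].
Proof.
case=> d [ld fd [Nd st]].
have [p0 [p1 [p2 [p3 [E0 E1 E2 E3 cl]]]]] := crossing_clique4 Nd.
move: E0 fd; rewrite alphK ld /far Nd E2 => -[->] [<-].
suff -> : [set p0; p2; s; t] = [set p0; p1; p2; p3] by [].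
apply/setP => y; case: st => -[]; rewrite E1 E3 => -[<-] [<-].
all: by rewrite !inE; do ![case: eqP => //=].
Qed.

(* The vertices at the far end of the first segment of [g]: the end of its
   edge if that segment is clean, else the two ends of the edge crossing it. *)
Definition near_ends (g : D) : seq (option V) :=
  if lb (al g) is Some _ then [:: lb (al g)]
  else [:: lb (al (sg (al g))); lb (al (sg (sg (sg (al g)))))].

Lemma corner_face g : exists L R,
  [/\ fconnect (phi M) L R, lb L \in near_ends g & lb R \in near_ends (sg g)].
Proof.
have [L [Lg lL]] : exists L, fconnect (phi M) L (sg g) /\ lb L \in near_ends g.
  rewrite /near_ends; case E: (lb (al g)) => [v|].
    exists (al g); rewrite E mem_head; split => //.
    by rewrite (_ : sg g = phi M (al g)) ?fconnect1 // phiE alphK.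
  have [sg4 _ _] := crossingP E.
  exists (al (sg (sg (sg (al g))))); rewrite !inE eqxx orbT; split => //.
  rewrite (_ : sg g = iter 2 (phi M) (al (sg (sg (sg (al g)))))) ?fconnect_iter //.
  by rewrite /= !phiE alphK sg4 alphK.
have [R [gR lR]] : exists R, fconnect (phi M) (sg g) R /\ lb R \in near_ends (sg g).
  rewrite /near_ends; case E: (lb (al (sg g))) => [v|].
    by exists (phi M (sg g)); split; [apply: fconnect1 | rewrite phiE lab_sigm E mem_head].
  by exists (iter 2 (phi M) (sg g)); rewrite fconnect_iter /= !phiE lab_sigm mem_head.
by exists L, R; split => //; apply: connect_trans Lg gR.
Qed.

Lemma seg_consec_half d e u : lb d = Some u -> lb e = Some u -> far d != far e ->
  forall f, ((f == d) || (f == al d)) && ((phi M f == e) || (phi M f == al e)) ->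
  sg d = e.
Proof.
move=> ld le de f /andP [/orP [] /eqP -> /orP [] /eqP]; rewrite phiE ?alphK // => E.
- have la : lb (al d) = Some u by rewrite -le -E lab_sigm.
  by have [_] := far_neq ld; rewrite /far la eqxx.
- case Ed: (lb (al d)) => [v|].
    have la : lb (al e) = Some v by rewrite -E lab_sigm.
    by move: de; rewrite /far Ed la eqxx.
  have [_ _] := crossingP Ed.
  by rewrite E !alphK ld le /= inE eqxx.
- have la : lb (al e) = Some u by rewrite -E lab_sigm.
  by have [_] := far_neq le; rewrite /far la eqxx.
Qed.

Lemma seg_consec_sigm d e u : lb d = Some u -> lb e = Some u -> far d != far e ->
  seg_consec d e -> sg d = e \/ sg e = d.
Proof.
move=> ld le de [f /orP [] H].
  by left; apply: (seg_consec_half ld le de H).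
by right; apply: (seg_consec_half le ld _ H); rewrite eq_sym.
Qed.

Lemma near_ends_link (F : {set V}) d u x o : lb d = Some u -> far d = Some x ->
  (lb (al d) != None /\ x \in F) \/
  (exists y z, crosses_at d y z /\ F = [set u; x; y; z]) ->
  o \in near_ends d -> exists2 y, o = Some y & y \in F :\ u.
Proof.
move=> ld fd HF; rewrite /near_ends; case Ed: (lb (al d)) => [v|].
  case: HF => [[_ xF]|[y [z [[] ]]]]; last by rewrite Ed.
  have [_] := far_neq ld; move: fd; rewrite /far Ed => -[->] xu.
  rewrite inE => /eqP ->; exists x => //.
  by rewrite !inE xF andbT; apply: contraNneq xu => ->.
case: HF => [[]|[y [z [[_ yz] ->]]]]; first by rewrite Ed.
move=> o_near; have [_ _] := crossingP Ed; rewrite /= alphK ld => /andP [u_new _].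
have ou : o != Some u.
  by apply: contraNneq u_new => <-; move: o_near; rewrite !inE => /orP [] ->; rewrite ?orbT.
have : o \in [:: Some y; Some z].
  by move: o_near; case: yz => -[-> ->]; rewrite !inE // orbC.
rewrite !inE => /orP [] /eqP oE; rewrite oE in ou; [exists y | exists z] => //;
  by rewrite !inE eqxx !orbT andbT; apply: contraNneq ou => ->.
Qed.

Lemma near_ends_host (S : {set V}) e u w o :
  ~ has_link adj S 3 -> ~ has_link adj S 2 ->
  lb e = Some u -> far e = Some w -> u \in S -> w \in S ->
  o \in near_ends e -> exists2 w', o = Some w' & w' \in S :\ u.
Proof.
move=> N3 N2 le fe uS wS; rewrite /near_ends; case Ee: (lb (al e)) => [v|].
  have [_] := far_neq le; move: fe; rewrite /far Ee => -[->] wu.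
  rewrite inE => /eqP ->; exists w => //.
  by rewrite !inE wS andbT; apply: contraNneq wu => ->.
have [p0 [p1 [p2 [p3 [E0 E1 E2 E3 cl]]]]] := crossing_clique4 Ee.
move: E0 fe; rewrite alphK le /far Ee E2 => -[?] [?]; subst p0 p2.
have := clique4_uniq cl; rewrite /= !inE !negb_or => /and4P [/and3P [u1 uw u3] _ _ _].
have /subsetP clS : [set u; p1; w; p3] \subset S.
  apply: clique4_sub_no_link N3 N2 cl _; apply/card_gt1P; exists u, w.
  by rewrite !inE !eqxx uS wS ?orbT.
rewrite E1 E3 => /orP [] /eqP ->; [exists p1 | exists p3] => //;
  by rewrite !inE 1?eq_sym ?u1 ?u3 clS // !inE eqxx ?orbT.
Qed.

Lemma swm_micro_anchored (S F : {set V}) : swm adj M S F ->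
  ~ has_link adj S 3 -> ~ has_link adj S 2 -> anchored adj S F.
Proof.
case=> _ _ _ _ micro N3 N2.
have [u [x [w [d [e [uS xS wS [ld fd le fe de] HF]]]]]] := micro N3 N2.
have uF : u \in F by case: HF => [[_ []]|[y [z [_ ->]]]] //; rewrite !inE eqxx.
have HF' : (lb (al d) != None /\ x \in F) \/
           (exists y z, crosses_at d y z /\ F = [set u; x; y; z]).
  by case: HF => [[? []]|]; [left | right].
have fde : far d != far e by rewrite fd fe; apply: contraNneq xS => -[->].
have [P [Q [PQ Pd Qe]]] : exists P Q,
    [/\ fconnect (phi M) P Q, lb P \in near_ends d & lb Q \in near_ends e].
  case: (seg_consec_sigm ld le fde de) => <-.
    by have [L [R [LR Ld Re]]] := corner_face d; exists L, R.
  have [L [R [LR Le Rd]]] := corner_face e; exists R, L.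
  by rewrite fconnect_sym //; apply: perm_inj.
have [y Py yFu] := near_ends_link ld fd HF' Pd.
have [w' Qw' w'Su] := near_ends_host N3 N2 le fe uS wS Qe.
exists u, y, w'; split => //; first by rewrite inE uF uS.
have [//|yw'] := eqVneq y w'.
by rewrite (face_adj Py Qw' PQ yw') orbT.
Qed.

Lemma swm_card_gt1 (S F : {set V}) :
  swm adj M S F -> has_link adj S 2 -> 1 < #|F :&: S|.
Proof.
case=> _ _ strong weak _ h2; rewrite ltnNge; apply/negP => le1.
have N3 : ~ has_link adj S 3 by move/strong=> E; rewrite E in le1.
by rewrite (weak N3 h2) in le1.
Qed.

Lemma swm_anchored (S F : {set V}) : swm adj M S F -> anchored adj S F.
Proof.
move=> sw; have [le1|] := leqP #|F :&: S| 1; last first.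
  case/card_gt1P => p [q [pFS qFS pq]]; move: qFS; rewrite inE => /andP [qF qS].
  by exists p, q, q; split; rewrite ?eqxx // !inE eq_sym pq ?qF ?qS.
have [_ _ strong _ _] := sw.
have N3 : ~ has_link adj S 3 by move/strong=> E; rewrite E in le1.
have N2 : ~ has_link adj S 2 by move/(swm_card_gt1 sw); rewrite ltnNge le1.
exact: swm_micro_anchored sw N3 N2.
Qed.

Section Extension.
Variables (N : nat) (VS K : nat -> {set V}).
Hypothesis seqVS : K4_ext_seq adj M N VS K.

Lemma ext_seq_step j : j < N -> swm adj M (VS j) (K j.+1) /\ VS j.+1 = VS j :|: K j.+1.
Proof. by case: seqVS => _ _ step jN; apply: (step j.+1). Qed.

Lemma ext_seq_sub j k : j <= k -> k <= N -> VS j \subset VS k.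
Proof.
elim: k => [|k IH]; first by rewrite leqn0 => /eqP ->.
rewrite leq_eqVlt => /orP [/eqP -> //|jk] kN.
have [_ ->] := ext_seq_step kN.
exact: subset_trans (IH jk (ltnW kN)) (subsetUl _ _).
Qed.

Lemma ext_seq_two_connected j : j <= N -> two_connected (VS j) adj.
Proof.
elim: j => [|j IH] jN; first by case: seqVS => cl _ _; apply: clique4_two_connected.
have [sw ->] := ext_seq_step jN; have [cK _ _ _ _] := sw.
exact: (two_connected_setU adj_sym (IH (ltnW jN)) cK (swm_anchored sw)).
Qed.

Lemma ext_step_path_avoiding m (B : {set V}) a b c : m < N -> VS m.+1 \subset B ->
  a \in VS m -> a \notin K m.+1 -> b \in K m.+1 -> b \notin VS m ->
  c != a -> c != b -> (c \in VS m -> has_link adj (VS m) 2) ->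
  connect (rel_on (B :\ c) (deledge adj [set a; b])) a b.
Proof.
move=> mN sB am aK bK bm ca cb weak.
have [sw defVS] := ext_seq_step mN; have [[_ cK] Kgt0 _ _ _] := sw.
move: sB; rewrite defVS subUset => /andP [mB KB].
have inB y : y \in VS m :\ c -> y \in B :\ c.
  by rewrite !inE => /andP [-> /(subsetP mB)].
have [p [pK pm pc]] : exists p, [/\ p \in K m.+1, p \in VS m & p != c].
  have [cm|cm] := boolP (c \in VS m).
    have /card_gt1P [p [q [pKm qKm pq]]] := swm_card_gt1 sw (weak cm).
    move: pKm qKm; rewrite !inE => /andP [pK pm] /andP [qK qm].
    have [pc|] := eqVneq p c; last by exists p.
    by exists q; split; rewrite // -pc eq_sym.
  move: Kgt0 => /andP [/card_gt0P [p]]; rewrite inE => /andP [pK pm] _.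
  by exists p; split => //; apply: contraNneq cm => <-.
have pa : p != a by apply: contraNneq aK => <-.
have pb : p != b by apply: contraNneq bm => <-.
have ab : a != b by apply: contraNneq bm => <-.
have conn : ind_connected (VS m :\ c) adj.
  exact: two_connected_setD1 (ext_seq_two_connected (ltnW mN)).
have am' : a \in VS m :\ c by rewrite !inE eq_sym ca am.
have pm' : p \in VS m :\ c by rewrite !inE pc pm.
apply: (connect_trans (y := p)).
  apply: connect_rel_on_lift (conn a p am' pm') => y z ym zm yz.
  apply: deledge_connect1 (inB _ ym) (inB _ zm) yz _.
  have bn : b \notin VS m :\ c by rewrite inE (negbTE bm) andbF.
  apply: (set_neq_mem (t := b)) (set22 a b).
  by rewrite !inE negb_or; apply/andP; split; apply: contraNneq bn => ->.
have bB : b \in B :\ c by rewrite !inE eq_sym cb (subsetP KB).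
apply: deledge_connect1 (inB _ pm') bB (cK p b pK bK pb) _.
by apply: (set_neq_mem (t := a)) (set21 a b); rewrite !inE negb_or eq_sym pa ab.
Qed.

Lemma ext_seq_path_avoiding i m a b c x : i <= N -> m <= i ->
  a \in VS m -> b \in VS m -> c \in VS i -> x \notin VS i ->
  clique4 adj [set x; c; a; b] ->
  connect (rel_on (VS i :\ c) (deledge adj [set a; b])) a b.
Proof.
move=> iN + + + ci xi cl.
have := clique4_uniq cl; rewrite /= !inE !negb_or => /and4P [_ /andP [ca cb] ab _].
elim: m => [|m IH] mi am bm.
  have [cl0 _ _] := seqVS.
  exact: clique4_path_avoiding cl0 (ext_seq_sub (leq0n i) iN) am bm ab ca cb.
have mN : m < N := leq_trans mi iN.
have [[cK _ _ _ _] defVS] := ext_seq_step mN.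
have xm : x \notin VS m := contra (subsetP (ext_seq_sub (ltnW mi) iN) x) xi.
have subi : VS m.+1 \subset VS i := ext_seq_sub mi iN.
have weak : c \in VS m -> (a \in VS m) != (b \in VS m) -> has_link adj (VS m) 2.
  move=> cm ab_m; exists [set x; c; a; b]; split => //.
  rewrite card_setI4 ?(clique4_uniq cl) //= (negbTE xm) cm.
  by move: ab_m; case: (a \in VS m); case: (b \in VS m).
have [/andP [aK bK]|notK] := boolP ((a \in K m.+1) && (b \in K m.+1)).
  apply: clique4_path_avoiding cK _ aK bK ab ca cb.
  by apply: subset_trans subi; rewrite defVS subsetUr.
move: am bm notK; rewrite defVS !inE.
case: (boolP (a \in VS m)) => am; case: (boolP (b \in VS m)) => bm //= aK bK notK.
- exact: IH (ltnW mi) am bm.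
- rewrite bK andbT in notK.
  apply: (ext_step_path_avoiding mN subi am notK bK bm ca cb) => cm.
  by apply: weak; rewrite // am (negbTE bm).
- rewrite aK /= in notK; apply: (connect_deledge_swap adj_sym).
  apply: (ext_step_path_avoiding mN subi bm notK aK am cb ca) => cm.
  by apply: weak; rewrite // bm (negbTE am).
- by rewrite aK bK in notK.
Qed.

Lemma ext_seq_removable i a b c x : i <= N ->
  a \in VS i -> b \in VS i -> c \in VS i -> x \notin VS i ->
  clique4 adj [set x; c; a; b] -> two_connected (VS i) (deledge adj [set a; b]).
Proof.
move=> iN ai bi ci xi cl; have [_ cl_adj] := cl.
have := clique4_uniq cl; rewrite /= !inE !negb_or => /and4P [_ /andP [ca cb] ab _].
have adj_ac : adj a c by rewrite cl_adj // ?inE ?eqxx ?orbT // eq_sym.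
have adj_cb : adj c b by rewrite cl_adj // ?inE ?eqxx ?orbT.
have via_c (A : {set V}) : a \in A -> b \in A -> c \in A ->
    connect (rel_on A (deledge adj [set a; b])) a b.
  by move=> aA bA cA; apply: (triangle_path aA bA cA ab ca cb adj_ac adj_cb).
have [gt2 conn conn1] := ext_seq_two_connected iN.
split => //.
  by apply: (ind_connected_deledge adj_sym conn) => aS bS; apply: via_c.
move=> v vi; apply: (ind_connected_deledge adj_sym (conn1 v vi)) => av bv.
have [->|vc] := eqVneq v c; first exact: ext_seq_path_avoiding iN (leqnn i) ai bi ci xi cl.
by apply: via_c; rewrite // !inE eq_sym vc.
Qed.

End Extension.

End Drawing.

Theorem proposition4p10 (V : finType) (adj : rel V) (M : map1p V)
  (N : nat) (VS F : nat -> {set V}) (i : nat) (x : V) :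
  drawing adj M -> maximal adj M -> 4 <= #|V| -> every_edge_in_K4 adj ->
  K4_ext_seq adj M N VS F -> i < N ->
  #|F i.+1 :&: VS i| = 3 -> x \in F i.+1 -> x \notin VS i ->
  ~ (exists a1 b1 a2 b2 c1 c2 : V,
       [/\ [/\ a1 \in VS i, b1 \in VS i, a2 \in VS i & b2 \in VS i] /\
           (c1 \in VS i /\ c2 \in VS i),
           adj a1 b1, adj a2 b2, [set a1; b1] != [set a2; b2] &
           [/\ nonremovable adj (VS i) a1 b1, nonremovable adj (VS i) a2 b2,
               crosses M x c1 a1 b1 & crosses M x c2 a2 b2]])
  /\
  ~ (exists a b c : V,
       [/\ [/\ a \in VS i, b \in VS i & c \in VS i],
           [/\ adj a b, adj b c & adj c a],
           nonremovable adj (VS i) a b,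
           cutset adj (VS i) [set a; c] /\ cutset adj (VS i) [set b; c] &
           crosses M x c a b]).
Proof.
move=> drawM maxM _ _ seqVS iN _ _ xi.
have removable a b c : a \in VS i -> b \in VS i -> c \in VS i ->
    crosses M x c a b -> ~ nonremovable adj (VS i) a b.
  move=> ai bi ci /(crosses_clique4 drawM maxM) cl; apply.
  exact: (ext_seq_removable drawM maxM seqVS (ltnW iN) ai bi ci xi cl).
split.
  case=> a1 [b1 [_ [_ [c1 [_ [[[a1i b1i _ _] [c1i _]] _ _ _ [nr _ cr _]]]]]]].
  exact: removable a1i b1i c1i cr nr.
by case=> a [b [c [[ai bi ci] _ nr _ cr]]]; apply: removable ai bi ci cr nr.
Qed.
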